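(* Let $\varepsilon>0$ be sufficiently small, $n$ a positive integer, $v$ a binary string, and $r_1>r_2>\dots>r_k$ positive integers with $r_j\ge r_{j+1}/\varepsilon^4$ for all $j$, such that $l_j=\varepsilon^2r_j$ are integers, $l_1\mid |v|$, $l_{j+1}\mid l_j$, and $\mathrm{adv}(v,A_{r_j,n})\ge\varepsilon/2$ for every $j=1,\dots,k$. Let $v_0=v$ and for $j=1,\dots,k$ let $v_j$ be chosen uniformly at random among the consecutive non-overlapping length-$l_j$ substrings into which $v_{j-1}$ is split, and let $B_j=\mathrm{bias}(v_j)$. Then $\mathrm{Var}(B_{i+1})\ge\mathrm{Var}(B_i)+\frac{\varepsilon^3}{1200}$ for all $1\le i<k$.
   Context: For a binary string $w$, $\mathrm{bias}(w)=\frac{\mathrm{count}_1(w)-\mathrm{count}_0(w)}{|w|}$, where $\mathrm{count}_a(w)$ is the number of occurrences of symbol $a$ in $w$. A matching $M$ between strings $a,b$ is a pair of increasing index sequences in $a$ and $b$ of equal length $|M|$ matching equal symbols; $\mathrm{adv}_M(a,b)=\frac{3|M|-|a|-|b|}{|a|}$ and $\mathrm{adv}(a,b)=\max_M\mathrm{adv}_M(a,b)$. $A_{r,n}$ is the length-$n$ prefix of $(0^r1^r)^\infty$. *)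

From Stdlib Require Import Reals Lra Lia List Arith Bool Sorted.
Import ListNotations.
Open Scope R_scope.

Definition count1 (w : list bool) : nat := length (filter (fun b => b) w).
Definition count0 (w : list bool) : nat := length (filter negb w).

Definition bias (w : list bool) : R :=
  (INR (count1 w) - INR (count0 w)) / INR (length w).

Fixpoint sublists {A : Type} (l : list A) : list (list A) :=
  match l with
  | [] => [[]]
  | x :: xs => let s := sublists xs in map (cons x) s ++ s
  end.

Definition is_matching (a b : list bool) (I J : list nat) : Prop :=
  StronglySorted lt I /\ StronglySorted lt J /\
  Forall (fun i => (i < length a)%nat) I /\ Forall (fun j => (j < length b)%nat) J /\
  length I = length J /\
  Forall (fun p => nth (fst p) a false = nth (snd p) b false) (combine I J).

Definition matchingb (a b : list bool) (M : list nat * list nat) : bool :=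
  Nat.eqb (length (fst M)) (length (snd M)) &&
  forallb (fun p => Bool.eqb (nth (fst p) a false) (nth (snd p) b false))
          (combine (fst M) (snd M)).

(* all matchings between a and b: increasing index sequences are exactly the
   subsequences of [0; ...; |a|-1] (resp. |b|) *)
Definition matchings (a b : list bool) : list (list nat * list nat) :=
  filter (matchingb a b)
    (list_prod (sublists (seq 0 (length a))) (sublists (seq 0 (length b)))).

Definition adv_M (a b : list bool) (M : list nat * list nat) : R :=
  (3 * INR (length (fst M)) - INR (length a) - INR (length b)) / INR (length a).

(* adv(a,b) = max over all matchings M of adv_M(a,b); the empty matching
   always exists, so it serves as the initial value of the maximum. *)
Definition adv (a b : list bool) : R :=
  fold_right Rmax (adv_M a b ([], [])) (map (adv_M a b) (matchings a b)).

(* A_{r,n}: the length-n prefix of (0^r 1^r)^infinity; position i holds 1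
   iff floor(i / r) is odd. *)
Definition A (r n : nat) : list bool := map (fun i => Nat.odd (i / r)) (seq 0 n).

Definition blocks (l : nat) (w : list bool) : list (list bool) :=
  map (fun i => firstn l (skipn (i * l) w)) (seq 0 (length w / l)).

Definition average (xs : list R) : R := fold_right Rplus 0 xs / INR (length xs).

(* Expectation of g(v_m) for the random process v_0 = w and v_j a uniformly
   random block of length ls_j of v_{j-1}, where ls = [l_1; ...; l_m]. *)
Fixpoint Exp (ls : list nat) (w : list bool) (g : list bool -> R) : R :=
  match ls with
  | [] => g w
  | l :: ls' => average (map (fun u => Exp ls' u g) (blocks l w))
  end.

Definition levels (l : nat -> nat) (i : nat) : list nat := map l (seq 1 i).

Definition VarB (l : nat -> nat) (v : list bool) (i : nat) : R :=
  Exp (levels l i) v (fun w => bias w ^ 2) - (Exp (levels l i) v bias) ^ 2.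

From Stdlib Require Import Reals List Arith Lia Lra Bool.
Import ListNotations.
Open Scope R_scope.

(* By the law of total variance, [Var(B_(i+1)) - Var(B_i)] is the average over
   the level-[i] blocks [B] of the variance of the biases of the sub-blocks of
   [B].  A matching of [v] with [A_(r,n)], [r = r_(i+1)], is a common
   subsequence; cut [A_(r,n)] into segments matched against the blocks [B], and
   these into pieces matched against the sub-blocks [u] of [B].  If the piece of
   [u] is a run of equal symbols, it gains at most [gain p] per symbol, [p] the
   density of ones in [B], up to the deviation of the number of ones of [u] from
   [p |u|]; otherwise it costs at most [2 |u|] per switch of [A_(r,n)], of which
   there are at most [n / r].  Since [gain p + gain (1 - p) <= 0] and segments
   of [A_(r,n)] are balanced up to [r], a block gains at most [r] plus the
   deviations of its sub-blocks, and by AM-GM the deviations are controlled by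
   the within-block variances.  With [l_(i+1) = eps^2 r] and [r <= eps^2 l_i]
   all other terms are [O(eps^2 |v|)], so an average within-block variance
   below [eps^3 / 1200] would force the advantage below [eps / 2]. *)

Lemma count1_app x y : count1 (x ++ y) = (count1 x + count1 y)%nat.
Proof. unfold count1. now rewrite filter_app, length_app. Qed.

Lemma count0_app x y : count0 (x ++ y) = (count0 x + count0 y)%nat.
Proof. unfold count0. now rewrite filter_app, length_app. Qed.

Lemma count1_add_count0 x : (count1 x + count0 x)%nat = length x.
Proof. unfold count1, count0. induction x as [|[] x IH]; simpl; lia. Qed.

Lemma INR_length_counts x : INR (length x) = INR (count1 x) + INR (count0 x).
Proof. now rewrite <- plus_INR, count1_add_count0. Qed.

Lemma bias_count1 w : (0 < length w)%nat ->
  bias w = 2 * INR (count1 w) / INR (length w) - 1.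
Proof.
  intro Hw. assert (0 < INR (length w)) by (apply lt_0_INR; exact Hw).
  unfold bias. rewrite (INR_length_counts w) in *. field. lra.
Qed.

Inductive subseq {T : Type} : list T -> list T -> Prop :=
| subseq_nil : subseq [] []
| subseq_skip x s t : subseq s t -> subseq s (x :: t)
| subseq_keep x s t : subseq s t -> subseq (x :: s) (x :: t).

Lemma subseq_nil_l {T} (t : list T) : subseq [] t.
Proof. induction t; constructor; assumption. Qed.

Lemma subseq_nil_r {T} (s : list T) : subseq s [] -> s = [].
Proof. now inversion 1. Qed.

Lemma subseq_app_r_inv {T} (c x y : list T) : subseq c (x ++ y) ->
  exists c1 c2, c = c1 ++ c2 /\ subseq c1 x /\ subseq c2 y.
Proof.
  revert c; induction x as [|a x IH]; intros c H; simpl in H.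
  - exists [], c. repeat split; [constructor | exact H].
  - inversion H as [|? ? ? H'|? c' ? H']; subst;
      destruct (IH _ H') as (c1 & c2 & -> & H1 & H2).
    + exists c1, c2. repeat split; [now constructor | exact H2].
    + exists (a :: c1), c2. repeat split; [now constructor | exact H2].
Qed.

Lemma subseq_app_l_inv {T} (c1 c2 X : list T) : subseq (c1 ++ c2) X ->
  exists X1 X2, X = X1 ++ X2 /\ subseq c1 X1 /\ subseq c2 X2.
Proof.
  intro H. remember (c1 ++ c2) as c eqn:E. revert c1 c2 E.
  induction H as [|x s t H IH|x s t H IH]; intros c1 c2 E.
  - destruct c1, c2; try discriminate. exists [], []. repeat split; constructor.
  - destruct (IH _ _ E) as (X1 & X2 & -> & H1 & H2).
    exists (x :: X1), X2. repeat split; [now constructor | exact H2].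
  - destruct c1 as [|b c1]; simpl in E.
    + subst c2. exists [], (x :: t). repeat split; [constructor | now constructor].
    + injection E as <- E. destruct (IH _ _ E) as (X1 & X2 & -> & H1 & H2).
      exists (x :: X1), X2. repeat split; [now constructor | exact H2].
Qed.

Lemma subseq_length {T} (s t : list T) : subseq s t -> (length s <= length t)%nat.
Proof. induction 1; simpl; lia. Qed.

Lemma subseq_count1 s t : subseq s t -> (count1 s <= count1 t)%nat.
Proof. unfold count1. induction 1; simpl; try destruct x; simpl; lia. Qed.

Lemma subseq_count0 s t : subseq s t -> (count0 s <= count0 t)%nat.
Proof. unfold count0. induction 1; simpl; try destruct x; simpl; lia. Qed.

Definition sumR (xs : list R) : R := fold_right Rplus 0 xs.

Lemma average_sumR xs : average xs = sumR xs / INR (length xs).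
Proof. reflexivity. Qed.

Lemma sumR_app a b : sumR (a ++ b) = sumR a + sumR b.
Proof. unfold sumR. induction a; simpl; [ring | rewrite IHa; ring]. Qed.

Lemma sumR_concat {T} (h : T -> R) (L : list (list T)) :
  sumR (map h (concat L)) = sumR (map (fun y => sumR (map h y)) L).
Proof. induction L; simpl; [reflexivity | now rewrite map_app, sumR_app, IHL]. Qed.

Lemma sumR_mulr {T} (f : T -> R) (a : R) xs :
  sumR (map (fun x => f x * a) xs) = sumR (map f xs) * a.
Proof. unfold sumR. induction xs; simpl; [ring | rewrite IHxs; ring]. Qed.

Lemma sumR_add {T} (f g : T -> R) xs :
  sumR (map (fun x => f x + g x) xs) = sumR (map f xs) + sumR (map g xs).
Proof. unfold sumR. induction xs; simpl; [ring | rewrite IHxs; ring]. Qed.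

Lemma sumR_const {T} (a : R) (xs : list T) : sumR (map (fun _ => a) xs) = INR (length xs) * a.
Proof.
  unfold sumR. induction xs as [|x xs IH]; [simpl; ring|].
  change (length (x :: xs)) with (S (length xs)). rewrite S_INR.
  simpl map; simpl fold_right. rewrite IH. ring.
Qed.

Lemma sumR_ext {T} (f g : T -> R) xs :
  (forall x, In x xs -> f x = g x) -> sumR (map f xs) = sumR (map g xs).
Proof. intro H. f_equal. now apply map_ext_in. Qed.

Lemma sumR_le {T} (f g : T -> R) xs :
  (forall x, In x xs -> f x <= g x) -> sumR (map f xs) <= sumR (map g xs).
Proof.
  unfold sumR. induction xs as [|x xs IH]; simpl; intro H; [lra|].
  specialize (IH (fun y Hy => H y (or_intror Hy))). specialize (H x (or_introl eq_refl)). lra.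
Qed.

Lemma average_sub {T} (f g : T -> R) xs :
  average (map f xs) - average (map g xs) = average (map (fun x => f x - g x) xs).
Proof.
  rewrite !average_sumR, !length_map.
  rewrite (sumR_ext (fun x => f x - g x) (fun x => f x + g x * (-1))) by (intros; ring).
  rewrite sumR_add, sumR_mulr. unfold Rdiv. ring.
Qed.

Lemma average_sqr_dev {T} (f : T -> R) xs :
  average (map (fun x => (f x - average (map f xs)) ^ 2) xs)
  = average (map (fun x => f x ^ 2) xs) - average (map f xs) ^ 2.
Proof.
  destruct xs as [|x0 xs]; [unfold average, Rdiv; simpl; ring|].
  set (b := average (map f (x0 :: xs))).
  assert (Hm : 0 < INR (length (x0 :: xs))) by (apply lt_0_INR; simpl; lia).
  assert (Hs : sumR (map f (x0 :: xs)) = b * INR (length (x0 :: xs)))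
    by (unfold b; rewrite average_sumR, length_map; field; lra).
  rewrite !average_sumR, !length_map.
  rewrite (sumR_ext _ (fun x => (f x ^ 2 + f x * (-2 * b)) + b ^ 2)) by (intros; ring).
  rewrite !sumR_add, sumR_mulr, sumR_const, Hs. field. lra.
Qed.

Lemma length_concat_uniform {T} (us : list (list T)) c :
  Forall (fun u => length u = c) us -> length (concat us) = (length us * c)%nat.
Proof. induction 1; simpl; [reflexivity | rewrite length_app; lia]. Qed.

Lemma average_concat {T} (h : T -> R) (us : list (list T)) c :
  Forall (fun u => length u = c) us ->
  average (map (fun u => average (map h u)) us) = average (map h (concat us)).
Proof.
  intro H. rewrite !average_sumR, !length_map, (length_concat_uniform us c H), sumR_concat.
  rewrite Forall_forall in H.
  rewrite (sumR_ext _ (fun u => sumR (map h u) * / INR c))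
    by (intros u Hu; rewrite average_sumR, length_map, H; auto).
  rewrite sumR_mulr, mult_INR. unfold Rdiv. rewrite Rinv_mult. ring.
Qed.

Lemma blocks_spec l w : (0 < l)%nat -> Nat.divide l (length w) ->
  Forall (fun u => length u = l) (blocks l w) /\ concat (blocks l w) = w /\
  length (blocks l w) = (length w / l)%nat.
Proof.
  intros Hl [q Hq]. unfold blocks.
  replace (length w / l)%nat with q by (rewrite Hq, Nat.div_mul; lia).
  rewrite length_map, length_seq. clear -Hl Hq.
  revert w Hq; induction q as [|q IH]; intros w Hq.
  - destruct w; [|discriminate]. repeat split; constructor.
  - destruct (IH (skipn l w)) as (H1 & H2 & _); [rewrite length_skipn; lia|].
    cbn [seq map]. rewrite <- seq_shift, map_map.
    erewrite map_ext in H1, H2 by (intro i; rewrite skipn_skipn, <- Nat.mul_succ_l; reflexivity).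
    rewrite Nat.mul_0_l, skipn_O. repeat split.
    + constructor; [rewrite length_firstn; nia | exact H1].
    + cbn [concat]. rewrite H2. apply firstn_skipn.
Qed.

Fixpoint blocks_iter (ls : list nat) (w : list bool) : list (list bool) :=
  match ls with
  | [] => [w]
  | l :: ls' => concat (map (blocks_iter ls') (blocks l w))
  end.

Fixpoint divisor_chain (m : nat) (ls : list nat) : Prop :=
  match ls with
  | [] => True
  | l :: ls' => (0 < l)%nat /\ Nat.divide l m /\ divisor_chain l ls'
  end.

Fixpoint last_level (m : nat) (ls : list nat) : nat :=
  match ls with [] => m | l :: ls' => last_level l ls' end.

Fixpoint leaf_count (m : nat) (ls : list nat) : nat :=
  match ls with [] => 1%nat | l :: ls' => (m / l * leaf_count l ls')%nat end.

Lemma divisor_chain_snoc_inv m ls l' : divisor_chain m (ls ++ [l']) ->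
  divisor_chain m ls /\ (0 < l')%nat /\ Nat.divide l' (last_level m ls).
Proof.
  revert m; induction ls as [|l ls IH]; intros m; simpl; [tauto|].
  intros (Hl & Hd & Hc). destruct (IH l Hc) as (? & ? & ?). tauto.
Qed.

Lemma concat_concat_map {T U} (f : T -> list (list U)) xs :
  concat (concat (map f xs)) = concat (map (fun x => concat (f x)) xs).
Proof. induction xs; simpl; [reflexivity | now rewrite concat_app, IHxs]. Qed.

Lemma blocks_iter_spec ls w : divisor_chain (length w) ls ->
  length (blocks_iter ls w) = leaf_count (length w) ls /\
  Forall (fun B => length B = last_level (length w) ls) (blocks_iter ls w) /\
  concat (blocks_iter ls w) = w.
Proof.
  revert w; induction ls as [|l ls IH]; intros w Hc.
  - simpl. repeat split; [constructor; constructor | apply app_nil_r].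
  - destruct Hc as (Hl & Hd & Hc). destruct (blocks_spec l w Hl Hd) as (HF & Hcat & Hlen).
    rewrite Forall_forall in HF.
    assert (HI : forall u, In u (blocks l w) ->
      length (blocks_iter ls u) = leaf_count l ls /\
      Forall (fun B => length B = last_level l ls) (blocks_iter ls u) /\
      concat (blocks_iter ls u) = u)
      by (intros u Hu; rewrite <- (HF u Hu); apply IH; now rewrite HF).
    simpl blocks_iter. cbn [last_level leaf_count]. repeat split.
    + rewrite (length_concat_uniform _ (leaf_count l ls)), length_map, Hlen; [reflexivity|].
      apply Forall_forall. intros y Hy. apply in_map_iff in Hy as (u & <- & Hu). now apply HI.
    + apply Forall_forall. intros B HB. apply in_concat in HB as (y & Hy & HB).
      apply in_map_iff in Hy as (u & <- & Hu). destruct (HI u Hu) as (_ & H2 & _).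
      rewrite Forall_forall in H2. auto.
    + rewrite concat_concat_map. rewrite <- Hcat at 2. rewrite <- (map_id (blocks l w)) at 2.
      f_equal. apply map_ext_in. intros u Hu. apply HI, Hu.
Qed.

Lemma Exp_blocks_iter ls w h : divisor_chain (length w) ls ->
  Exp ls w h = average (map h (blocks_iter ls w)).
Proof.
  revert w; induction ls as [|l ls IH]; intros w Hc.
  - unfold average, Rdiv; simpl. rewrite Rinv_1. ring.
  - destruct Hc as (Hl & Hd & Hc). destruct (blocks_spec l w Hl Hd) as (HF & _).
    rewrite Forall_forall in HF. cbn [Exp blocks_iter].
    rewrite <- (average_concat h _ (leaf_count l ls)), map_map.
    + f_equal. apply map_ext_in. intros u Hu. apply IH. now rewrite HF.
    + apply Forall_forall. intros y Hy. apply in_map_iff in Hy as (u & <- & Hu).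
      rewrite <- (HF u Hu). apply blocks_iter_spec. now rewrite HF.
Qed.

Lemma Exp_snoc ls l' w g :
  Exp (ls ++ [l']) w g = Exp ls w (fun x => average (map g (blocks l' x))).
Proof.
  revert w; induction ls as [|l ls IH]; intro w; simpl; [reflexivity|].
  f_equal. apply map_ext. intro u. apply IH.
Qed.

(** * The law of total variance *)

Lemma average_bias_blocks l B : (0 < l)%nat -> Nat.divide l (length B) ->
  average (map bias (blocks l B)) = bias B.
Proof.
  intros Hl Hd. destruct (blocks_spec l B Hl Hd) as (HF & Hcat & Hlen).
  rewrite Forall_forall in HF.
  destruct (Nat.eq_0_gt_0_cases (length B)) as [HB|HB].
  { assert (E : blocks l B = []) by (apply length_zero_iff_nil; rewrite Hlen, HB; apply Nat.Div0.div_0_l).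
    rewrite E. apply length_zero_iff_nil in HB. subst B. unfold bias, average, Rdiv; simpl. ring. }
  assert (Hlr : 0 < INR l) by (apply lt_0_INR; exact Hl).
  rewrite average_sumR, length_map.
  rewrite (sumR_ext _ (fun u => INR (count1 u) * (2 / INR l) + (-1))).
  2:{ intros u Hu. rewrite bias_count1, HF by (rewrite ?HF; auto). field. lra. }
  rewrite sumR_add, sumR_mulr, sumR_const, (bias_count1 B HB).
  assert (Hc1 : forall us, sumR (map (fun u => INR (count1 u)) us) = INR (count1 (concat us))).
  { induction us as [|u us IH]; [reflexivity|].
    cbn [map concat]. unfold sumR in *. simpl fold_right. rewrite IH, count1_app, plus_INR. ring. }
  rewrite Hc1, Hcat, Hlen. destruct Hd as [q Hq]. rewrite Hq, Nat.div_mul by lia.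
  assert (0 < INR q) by (apply lt_0_INR; nia).
  rewrite mult_INR. field. lra.
Qed.

Definition block_var (l : nat) (B : list bool) : R :=
  average (map (fun u => (bias u - bias B) ^ 2) (blocks l B)).

Lemma VarB_succ_sub l v i : divisor_chain (length v) (levels l (S i)) ->
  VarB l v (S i) - VarB l v i = average (map (block_var (l (S i))) (blocks_iter (levels l i) v)).
Proof.
  assert (Hlev : levels l (S i) = levels l i ++ [l (S i)])
    by (unfold levels; now rewrite seq_S, map_app).
  rewrite Hlev. intro Hc. apply divisor_chain_snoc_inv in Hc as (Hc & Hl & Hd).
  destruct (blocks_iter_spec _ _ Hc) as (_ & HF & _). rewrite Forall_forall in HF.
  set (Bs := blocks_iter (levels l i) v) in *.
  assert (Hab : forall B, In B Bs -> average (map bias (blocks (l (S i)) B)) = bias B)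
    by (intros B HB; apply average_bias_blocks; [exact Hl | now rewrite HF]).
  unfold VarB. rewrite Hlev, !Exp_snoc, !Exp_blocks_iter by exact Hc. fold Bs.
  rewrite (map_ext_in _ bias _ Hab).
  enough (average (map (fun B => average (map (fun w => bias w ^ 2) (blocks (l (S i)) B))) Bs)
          - average (map (fun w => bias w ^ 2) Bs) = average (map (block_var (l (S i))) Bs))
    by lra.
  rewrite average_sub. f_equal. apply map_ext_in. intros B HB.
  pose proof (average_sqr_dev bias (blocks (l (S i)) B)) as E.
  rewrite (Hab B HB) in E. exact (eq_sym E).
Qed.

(** * The periodic string [A r n] *)

Lemma divmod_succ_cases m r : (0 < r)%nat ->
  (S (m mod r) < r /\ S m / r = m / r /\ S m mod r = S (m mod r))%nat \/
  (S (m mod r) = r /\ S m / r = S (m / r) /\ S m mod r = 0)%nat.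
Proof.
  intro Hr. pose proof (Nat.div_mod_eq m r). pose proof (Nat.mod_upper_bound m r ltac:(lia)).
  destruct (Nat.lt_ge_cases (S (m mod r)) r); [left | right]; repeat split; try lia.
  - symmetry. apply (Nat.div_unique _ _ _ (S (m mod r))); lia.
  - symmetry. apply (Nat.mod_unique _ _ (m / r)); lia.
  - symmetry. apply (Nat.div_unique _ _ _ 0); lia.
  - symmetry. apply (Nat.mod_unique _ _ (S (m / r))); lia.
Qed.

Lemma length_A r n : length (A r n) = n.
Proof. unfold A. now rewrite length_map, length_seq. Qed.

Lemma A_succ r m : A r (S m) = A r m ++ [Nat.odd (m / r)].
Proof. unfold A. now rewrite seq_S, map_app. Qed.

Lemma A_counts r m : (0 < r)%nat ->
  if Nat.even (m / r) then count0 (A r m) = (count1 (A r m) + m mod r)%nat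
  else (count0 (A r m) + m mod r = count1 (A r m) + r)%nat.
Proof.
  intro Hr. induction m as [|m IH].
  - now rewrite Nat.Div0.div_0_l, Nat.Div0.mod_0_l.
  - rewrite A_succ, count1_app, count0_app. unfold Nat.odd.
    destruct (divmod_succ_cases m r Hr) as [(? & -> & ->) | (? & -> & ->)];
      rewrite ?Nat.even_succ; unfold Nat.odd, count1, count0 in *;
      destruct (Nat.even (m / r)); simpl; lia.
Qed.

Lemma A_prefix_balanced r m : (0 < r)%nat ->
  (count1 (A r m) <= count0 (A r m) <= count1 (A r m) + r)%nat.
Proof.
  intro Hr. pose proof (A_counts r m Hr). pose proof (Nat.mod_upper_bound m r ltac:(lia)).
  destruct (Nat.even (m / r)); lia.
Qed.

Lemma A_prefix r n P Z : P ++ Z = A r n -> P = A r (length P).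
Proof.
  intro E. assert (Hle : (length P <= n)%nat)
    by (rewrite <- (length_A r n), <- E, length_app; lia).
  replace P with (firstn (length P) (A r n)) at 1
    by (rewrite <- E, firstn_app, Nat.sub_diag, firstn_all, app_nil_r; reflexivity).
  unfold A. rewrite firstn_map. f_equal.
  replace n with (length P + (n - length P))%nat by lia.
  rewrite seq_app, firstn_app, length_seq, Nat.sub_diag, app_nil_r.
  apply firstn_all2. now rewrite length_seq.
Qed.

Lemma A_infix_balanced r n P X Y : (0 < r)%nat -> P ++ X ++ Y = A r n ->
  (count1 X <= count0 X + r /\ count0 X <= count1 X + r)%nat.
Proof.
  intros Hr E.
  pose proof (A_prefix r n P (X ++ Y) E) as H1.
  rewrite app_assoc in E. pose proof (A_prefix r n (P ++ X) Y E) as H2.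
  pose proof (A_prefix_balanced r (length P) Hr).
  pose proof (A_prefix_balanced r (length (P ++ X)) Hr).
  rewrite <- H1, <- H2, count1_app, count0_app in *. lia.
Qed.

Fixpoint switches (w : list bool) : nat :=
  match w with
  | x :: ((y :: _) as t) => ((if Bool.eqb x y then 0 else 1) + switches t)%nat
  | _ => 0%nat
  end.

Lemma switches_app x y : (switches x + switches y <= switches (x ++ y))%nat.
Proof.
  induction x as [|a [|b x] IH]; simpl in *; [lia | destruct y; simpl; lia | lia].
Qed.

Lemma switches_snoc x b d : x <> [] ->
  switches (x ++ [b]) = (switches x + (if Bool.eqb (last x d) b then 0 else 1))%nat.
Proof.
  induction x as [|a [|c x] IH]; intro Hx; [congruence | simpl; lia |].
  change ((a :: c :: x) ++ [b]) with (a :: (c :: x) ++ [b]).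
  cbn [switches app]. cbn [switches app] in IH. rewrite IH by discriminate.
  destruct x; simpl; lia.
Qed.

Lemma switches_pos X : (0 < count1 X)%nat -> (0 < count0 X)%nat -> (1 <= switches X)%nat.
Proof.
  unfold count1, count0.
  induction X as [|a [|b X] IH]; [simpl; lia | destruct a; simpl; lia |].
  intros H1 H0. simpl. destruct (Bool.eqb a b) eqn:E; [|lia].
  apply Bool.eqb_prop in E. subst b. simpl in IH.
  destruct a; simpl in *; apply IH; lia.
Qed.

Lemma switches_A r n : (0 < r)%nat -> (switches (A r n) * r <= n)%nat.
Proof.
  intro Hr. destruct n as [|m]; [reflexivity|].
  enough (switches (A r (S m)) * r <= m)%nat by lia.
  induction m as [|m IH]; [reflexivity|].
  assert (Hne : A r (S m) <> []) by (intro H; apply (f_equal (@length bool)) in H;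
    rewrite length_A in H; discriminate).
  assert (Hlast : last (A r (S m)) false = Nat.odd (m / r)) by (rewrite A_succ; apply last_last).
  rewrite (A_succ r (S m)), (switches_snoc _ _ false Hne), Hlast.
  destruct (divmod_succ_cases m r Hr) as [(_ & -> & _) | (Hs & -> & _)].
  - rewrite Bool.eqb_reflx. lia.
  - pose proof (Nat.div_mod_eq m r).
    assert (switches (A r (S m)) <= m / r)%nat by nia.
    destruct (Bool.eqb _ _); nia.
Qed.

(** * Local bounds on the size of a matching *)

(* [gain p] is the largest value of [(3 m - l - q) / q] when [m] symbols of a
   string of length [l] with [p l] ones are matched into a run of [q] ones; for
   [p > 1/3] it is attained at [m = q = p l]. *)
Definition gain (p : R) : R := if Rle_dec p (1/3) then -1 else 2 - / p.

Lemma gain_bounds p : 0 <= p <= 1 -> -1 <= gain p <= 1.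
Proof.
  intro Hp. unfold gain. destruct (Rle_dec p (1/3)); [lra|].
  assert (1 <= / p) by (rewrite <- Rinv_1; apply Rinv_le_contravar; lra).
  assert (/ p < 3) by (replace 3 with (/ (1/3)) by field; apply Rinv_lt_contravar; nra).
  lra.
Qed.

Lemma gain_add_compl_le0 p : 0 <= p <= 1 -> gain p + gain (1 - p) <= 0.
Proof.
  intro Hp. unfold gain.
  destruct (Rle_dec p (1/3)); destruct (Rle_dec (1 - p) (1/3)).
  - lra.
  - assert (/ (1 - p) >= 1) by (rewrite <- Rinv_1; apply Rle_ge, Rinv_le_contravar; lra). lra.
  - assert (/ p >= 1) by (rewrite <- Rinv_1; apply Rle_ge, Rinv_le_contravar; lra). lra.
  - assert (E : / p + / (1 - p) = / (p * (1 - p))) by (field; lra).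
    assert (p * (1 - p) <= 1/4) by (pose proof (Rle_0_sqr (2 * p - 1)); unfold Rsqr in *; nra).
    assert (/ (p * (1 - p)) >= 4)
      by (replace 4 with (/ (1/4)) by field; apply Rle_ge, Rinv_le_contravar; nra).
    lra.
Qed.

Lemma run_match_le p m q l e : 0 <= p <= 1 -> 0 <= m -> m <= q -> 0 <= l ->
  m <= p * l + e -> 3 * m - l - q <= gain p * q + 3 * Rabs e.
Proof.
  intros Hp Hm Hmq Hl He. pose proof (Rle_abs e). pose proof (Rabs_pos e). unfold gain.
  destruct (Rle_dec p (1/3)).
  - assert (p * l <= l / 3) by nra. lra.
  - (* convex combination of the bounds [m <= p l + e] and [m <= q], weight [1/(3p)] *)
    set (lam := / (3 * p)).
    assert (lam * (3 * p) = 1) by (unfold lam; field; lra).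
    assert (0 < lam) by (unfold lam; apply Rinv_0_lt_compat; lra).
    assert (lam <= 1) by (unfold lam; rewrite <- Rinv_1; apply Rinv_le_contravar; lra).
    replace (/ p) with (3 * lam) by (unfold lam; field; lra).
    assert (lam * (3 * m - l - q) <= lam * (3 * (p * l) + 3 * e - l - q))
      by (apply Rmult_le_compat_l; lra).
    assert ((1 - lam) * (3 * m - l - q) <= (1 - lam) * (2 * q - l))
      by (apply Rmult_le_compat_l; lra).
    assert (lam * e <= Rabs e) by nra.
    nra.
Qed.

Lemma subblock_match_le p u X c : 0 <= p <= 1 -> subseq c u -> subseq c X ->
  3 * INR (length c) - INR (length u) - INR (length X) <=
  gain p * INR (count1 X) + gain (1 - p) * INR (count0 X)
  + 3 * Rabs (INR (count1 u) - p * INR (length u)) + 2 * INR (length u) * INR (switches X).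
Proof.
  intros Hp Hu HX.
  pose proof (subseq_count1 _ _ Hu). pose proof (subseq_count0 _ _ Hu).
  pose proof (subseq_count1 _ _ HX). pose proof (subseq_count0 _ _ HX).
  pose proof (subseq_length _ _ Hu).
  pose proof (count1_add_count0 c). pose proof (count1_add_count0 u).
  pose proof (pos_INR (switches X)). pose proof (pos_INR (length u)).
  pose proof (gain_bounds p Hp). pose proof (gain_bounds (1 - p) ltac:(lra)).
  pose proof (pos_INR (count1 X)). pose proof (pos_INR (count0 X)).
  pose proof (Rabs_pos (INR (count1 u) - p * INR (length u))).
  assert (0 <= 2 * INR (length u) * INR (switches X)) by nra.
  rewrite (INR_length_counts X).
  destruct (Nat.eq_0_gt_0_cases (count0 X)) as [Hz0|Hz0];
    [|destruct (Nat.eq_0_gt_0_cases (count1 X)) as [Hz1|Hz1]].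
  - rewrite Hz0. simpl INR.
    assert (INR (length c) <= INR (count1 u)) by (apply le_INR; lia).
    assert (Hq : INR (length c) <= INR (count1 X)) by (apply le_INR; lia).
    pose proof (run_match_le p _ _ (INR (length u)) (INR (count1 u) - p * INR (length u)) Hp (pos_INR _) Hq
      ltac:(lra) ltac:(lra)).
    nra.
  - rewrite Hz1. simpl INR.
    assert (INR (length c) <= INR (count0 u)) by (apply le_INR; lia).
    assert (Hq : INR (length c) <= INR (count0 X)) by (apply le_INR; lia).
    pose proof (INR_length_counts u).
    pose proof (run_match_le (1 - p) _ _ (INR (length u)) (p * INR (length u) - INR (count1 u)) ltac:(lra)
      (pos_INR _) Hq ltac:(lra) ltac:(lra)) as Hrun.
    rewrite Rabs_minus_sym in Hrun. nra.
  - assert (1 <= INR (switches X)) by (apply (le_INR 1), switches_pos; assumption).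
    assert (INR (length c) <= INR (length u)) by (apply le_INR; lia).
    nra.
Qed.

Lemma block_match_le p l us c X : 0 <= p <= 1 -> Forall (fun u => length u = l) us ->
  subseq c (concat us) -> subseq c X ->
  3 * INR (length c) - INR (length (concat us)) - INR (length X) <=
  gain p * INR (count1 X) + gain (1 - p) * INR (count0 X)
  + sumR (map (fun u => 3 * Rabs (INR (count1 u) - p * INR l)) us)
  + 2 * INR l * INR (switches X).
Proof.
  intros Hp HF. pose proof (pos_INR l). revert c X.
  induction HF as [|u us Hu HF IH]; intros c X Hc HX; simpl in Hc.
  - apply subseq_nil_r in Hc. subst c. unfold sumR. simpl.
    pose proof (gain_bounds p Hp). pose proof (gain_bounds (1 - p) ltac:(lra)).
    pose proof (pos_INR (count1 X)). pose proof (pos_INR (count0 X)).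
    pose proof (pos_INR (switches X)). rewrite (INR_length_counts X). nra.
  - destruct (subseq_app_r_inv _ _ _ Hc) as (c1 & c2 & -> & Hc1 & Hc2).
    destruct (subseq_app_l_inv _ _ _ HX) as (X1 & X2 & -> & HX1 & HX2).
    pose proof (subblock_match_le p u X1 c1 Hp Hc1 HX1) as Hu1. rewrite Hu in Hu1.
    pose proof (IH c2 X2 Hc2 HX2).
    pose proof (le_INR _ _ (switches_app X1 X2)) as Hsw. rewrite plus_INR in Hsw.
    assert (2 * INR l * INR (switches X1) + 2 * INR l * INR (switches X2)
            <= 2 * INR l * INR (switches (X1 ++ X2))) by nra.
    cbn [concat map]. unfold sumR at 1. cbn [fold_right]. fold (sumR (map
      (fun u => 3 * Rabs (INR (count1 u) - p * INR l)) us)).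
    rewrite !length_app, !plus_INR, !count1_app, !count0_app, !plus_INR, Hu.
    lra.
Qed.

Lemma balanced_gain_le c1 c0 o z r : c1 + c0 <= 0 -> -1 <= c1 <= 1 -> -1 <= c0 <= 1 ->
  0 <= o -> 0 <= z -> o <= z + r -> z <= o + r -> c1 * o + c0 * z <= r.
Proof.
  intros. destruct (Rle_dec z o).
  - assert (c1 * o + c0 * z = c1 * (o - z) + (c1 + c0) * z) by ring. nra.
  - assert (c1 * o + c0 * z = c0 * (z - o) + (c1 + c0) * o) by ring. nra.
Qed.

Definition density (B : list bool) : R := INR (count1 B) / INR (length B).

Lemma density_range B : 0 <= density B <= 1.
Proof.
  unfold density. destruct (Nat.eq_0_gt_0_cases (length B)) as [E|E].
  { rewrite E. simpl INR. unfold Rdiv. rewrite Rinv_0. lra. }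
  assert (0 < INR (length B)) by (apply lt_0_INR; exact E).
  pose proof (INR_length_counts B). pose proof (pos_INR (count1 B)).
  pose proof (pos_INR (count0 B)).
  assert (INR (count1 B) / INR (length B) * INR (length B) = INR (count1 B)) by (field; lra).
  split; nra.
Qed.

Definition block_cost (r l : nat) (B : list bool) : R :=
  INR r + sumR (map (fun u => 3 * Rabs (INR (count1 u) - density B * INR l)) (blocks l B)).

(* A segment of [A r n] has as many ones as zeros up to [r], and
   [gain p + gain (1 - p) <= 0]: so the gain terms of a block sum to at most [r]. *)
Lemma blocks_match_le r n l L (Hr : (0 < r)%nat) (Hl : (0 < l)%nat) (HlL : Nat.divide l L)
  Bs c X P Y : Forall (fun B => length B = L) Bs -> P ++ X ++ Y = A r n ->
  subseq c (concat Bs) -> subseq c X ->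
  3 * INR (length c) - INR (length (concat Bs)) - INR (length X) <=
  sumR (map (block_cost r l) Bs) + 2 * INR l * INR (switches X).
Proof.
  intro HF. pose proof (pos_INR l). revert c X P.
  induction HF as [|B Bs HB HF IH]; intros c X P E Hc HX; simpl in Hc.
  - apply subseq_nil_r in Hc. subst c. unfold sumR. simpl.
    pose proof (pos_INR (switches X)). pose proof (pos_INR (length X)). nra.
  - destruct (subseq_app_r_inv _ _ _ Hc) as (c1 & c2 & -> & Hc1 & Hc2).
    destruct (subseq_app_l_inv _ _ _ HX) as (X1 & X2 & -> & HX1 & HX2).
    destruct (blocks_spec l B Hl ltac:(now rewrite HB)) as (HbF & Hbcat & _).
    rewrite <- Hbcat in Hc1.
    pose proof (block_match_le (density B) l _ c1 X1 (density_range B) HbF Hc1 HX1) as HB1.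
    rewrite Hbcat in HB1.
    pose proof (IH c2 X2 (P ++ X1) ltac:(rewrite <- E; now rewrite <- !app_assoc) Hc2 HX2).
    destruct (A_infix_balanced r n P X1 (X2 ++ Y) Hr ltac:(rewrite <- E; now rewrite <- !app_assoc))
      as [Hi1 Hi2].
    apply le_INR in Hi1, Hi2. rewrite plus_INR in Hi1, Hi2.
    pose proof (density_range B).
    pose proof (balanced_gain_le (gain (density B)) (gain (1 - density B))
      (INR (count1 X1)) (INR (count0 X1)) (INR r) (gain_add_compl_le0 _ (density_range B))
      (gain_bounds _ (density_range B)) (gain_bounds (1 - density B) ltac:(lra))
      (pos_INR _) (pos_INR _) Hi1 Hi2).
    pose proof (le_INR _ _ (switches_app X1 X2)) as Hsw. rewrite plus_INR in Hsw.
    assert (2 * INR l * INR (switches X1) + 2 * INR l * INR (switches X2)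
            <= 2 * INR l * INR (switches (X1 ++ X2))) by nra.
    cbn [concat map]. unfold sumR at 1. cbn [fold_right].
    fold (sumR (map (block_cost r l) Bs)).
    rewrite !length_app, !plus_INR. unfold block_cost at 1. lra.
Qed.

Lemma Rabs_le_amgm x t : 0 < t -> Rabs x <= (t + x ^ 2 / t) / 2.
Proof.
  intro Ht. pose proof (Rle_0_sqr (Rabs x - t)). unfold Rsqr in *.
  assert (Rabs x * Rabs x = x ^ 2) by (rewrite <- Rabs_mult, Rabs_right; nra).
  apply (Rmult_le_reg_r (2 * t)); [lra|]. field_simplify; [nra | lra].
Qed.

Lemma subblock_cost_le u B t : (0 < length u)%nat -> (0 < length B)%nat -> 0 < t ->
  3 * Rabs (INR (count1 u) - density B * INR (length u))
  <= 3 * INR (length u) / 4 * (t + (bias u - bias B) ^ 2 / t).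
Proof.
  intros Hu HB Ht.
  assert (0 < INR (length u)) by (apply lt_0_INR; exact Hu).
  assert (0 < INR (length B)) by (apply lt_0_INR; exact HB).
  replace (INR (count1 u) - density B * INR (length u))
    with (INR (length u) / 2 * (bias u - bias B))
    by (rewrite (bias_count1 u Hu), (bias_count1 B HB); unfold density; field; lra).
  rewrite Rabs_mult, (Rabs_right (INR (length u) / 2)) by lra.
  pose proof (Rabs_le_amgm (bias u - bias B) t Ht). nra.
Qed.

Lemma block_cost_le r l B t : (0 < l)%nat -> Nat.divide l (length B) -> (0 < length B)%nat ->
  0 < t -> block_cost r l B <= INR r + 3 * INR (length B) / 4 * (t + block_var l B / t).
Proof.
  intros Hl Hd HB Ht. unfold block_cost, block_var.
  destruct (blocks_spec l B Hl Hd) as (HF & _ & Hlen). rewrite Forall_forall in HF.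
  apply Rplus_le_compat_l. eapply Rle_trans.
  { apply (sumR_le _ (fun u => 3 * INR l / 4 * (t + (bias u - bias B) ^ 2 / t))).
    intros u Hu. rewrite <- (HF u Hu). apply subblock_cost_le; [rewrite HF; auto | lia | lra]. }
  set (m := length (blocks l B)) in *.
  assert (Hm : INR l * INR m = INR (length B)).
  { rewrite <- mult_INR. f_equal. rewrite Hlen. destruct Hd as [q ->].
    rewrite Nat.div_mul; lia. }
  assert (0 < INR m) by (apply lt_0_INR; rewrite Hlen; apply Nat.div_str_pos;
    split; [exact Hl | now apply Nat.divide_pos_le]).
  rewrite (sumR_ext _ (fun u => 3 * INR l / 4 * t + (bias u - bias B) ^ 2 * (3 * INR l / 4 / t)))
    by (intros; field; lra).
  rewrite sumR_add, sumR_const, sumR_mulr, average_sumR, length_map. fold m.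
  rewrite <- Hm. apply Req_le. field. lra.
Qed.

Lemma sum_block_cost_le r l L Bs t : (0 < l)%nat -> Nat.divide l L -> (0 < L)%nat -> 0 < t ->
  Forall (fun B => length B = L) Bs ->
  sumR (map (block_cost r l) Bs) <=
  INR (length Bs) * (INR r + 3 * INR L / 4 * t) + 3 * INR L / 4 / t * sumR (map (block_var l) Bs).
Proof.
  intros Hl Hd HL Ht HF. rewrite Forall_forall in HF.
  eapply Rle_trans.
  - apply (sumR_le _ (fun B => (INR r + 3 * INR L / 4 * t) + block_var l B * (3 * INR L / 4 / t))).
    intros B HB. replace (INR r + _ + _) with (INR r + 3 * INR L / 4 * (t + block_var l B / t))
      by (field; lra).
    rewrite <- (HF B HB). apply block_cost_le; rewrite ?HF; auto.
  - rewrite sumR_add, sumR_const, sumR_mulr. lra.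
Qed.

(** * Extracting a common subsequence from the advantage *)

Lemma fold_right_Rmax_ge x0 xs y :
  fold_right Rmax x0 xs >= y -> x0 >= y \/ exists z, In z xs /\ z >= y.
Proof.
  induction xs as [|a xs IH]; simpl; intro H; [now left|].
  unfold Rmax at 1 in H. destruct Rle_dec.
  - destruct (IH H) as [? | (z & ? & ?)]; [now left | right; exists z; auto].
  - right. exists a. auto.
Qed.

Lemma sublists_subseq {T} (g : nat -> T) l I : In I (sublists l) -> subseq (map g I) (map g l).
Proof.
  revert I; induction l as [|a l IH]; intros I H; simpl in H.
  - destruct H as [<- | []]. constructor.
  - apply in_app_iff in H as [H|H].
    + apply in_map_iff in H as (I' & <- & H). apply subseq_keep, IH, H.
    + apply subseq_skip, IH, H.
Qed.

Lemma map_nth_seq (v : list bool) : map (fun i => nth i v false) (seq 0 (length v)) = v.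
Proof.
  apply nth_ext with (d := (fun i => nth i v false) 0%nat) (d' := false);
    rewrite length_map, length_seq; [reflexivity|].
  intros i Hi. rewrite (map_nth (fun i => nth i v false)). now rewrite seq_nth.
Qed.

Lemma matchings_subseq a b M : In M (matchings a b) ->
  subseq (map (fun i => nth i a false) (fst M)) a /\
  subseq (map (fun i => nth i a false) (fst M)) b.
Proof.
  intro HM. unfold matchings in HM. apply filter_In in HM as [HM Hb].
  destruct M as [I J]. apply in_prod_iff in HM as [HI HJ]. simpl in *.
  unfold matchingb in Hb. simpl in Hb. apply andb_true_iff in Hb as [Hl Hf].
  apply Nat.eqb_eq in Hl.
  split.
  - pose proof (sublists_subseq (fun i => nth i a false) _ _ HI) as H.
    now rewrite map_nth_seq in H.
  - replace (map (fun i => nth i a false) I) with (map (fun j => nth j b false) J).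
    + pose proof (sublists_subseq (fun j => nth j b false) _ _ HJ) as H.
      now rewrite map_nth_seq in H.
    + clear HI HJ. revert J Hl Hf.
      induction I as [|i I IH]; intros [|j J] Hl Hf; try discriminate; [reflexivity|].
      simpl in Hf. apply andb_true_iff in Hf as [Hij Hf].
      apply Bool.eqb_prop in Hij. simpl. f_equal; auto.
Qed.

Lemma adv_common_subseq a b x : 0 < x -> adv a b >= x ->
  exists c, subseq c a /\ subseq c b /\ (0 < length a)%nat /\
    3 * INR (length c) - INR (length a) - INR (length b) >= x * INR (length a).
Proof.
  intros Hx H.
  assert (Hgain : forall M, adv_M a b M >= x -> (0 < length a)%nat /\
    3 * INR (length (fst M)) - INR (length a) - INR (length b) >= x * INR (length a)).
  { intros M HM. unfold adv_M in HM.
    destruct (Nat.eq_0_gt_0_cases (length a)) as [E|E].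
    { rewrite E in HM. simpl INR in HM. unfold Rdiv in HM. rewrite Rinv_0 in HM. lra. }
    assert (0 < INR (length a)) by (apply lt_0_INR; exact E).
    split; [exact E|]. apply Rle_ge. apply Rge_le in HM.
    apply (Rmult_le_compat_r (INR (length a))) in HM; [|lra].
    unfold Rdiv in HM. rewrite Rmult_assoc, Rinv_l in HM by lra. lra. }
  unfold adv in H. apply fold_right_Rmax_ge in H as [H | (z & Hz & H)].
  - exists []. destruct (Hgain _ H) as [? ?]. repeat split; auto using subseq_nil_l.
  - apply in_map_iff in Hz as (M & <- & HM). destruct (matchings_subseq a b M HM).
    destruct (Hgain M H) as [? ?].
    exists (map (fun i => nth i a false) (fst M)). rewrite length_map. auto.
Qed.

Lemma adv_le_block_costs eps r n l L Bs : 0 < eps -> (0 < r)%nat -> (0 < l)%nat ->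
  Nat.divide l L -> Forall (fun B => length B = L) Bs -> adv (concat Bs) (A r n) >= eps / 2 ->
  (0 < length (concat Bs))%nat /\ INR n <= 2 * INR (length (concat Bs)) /\
  eps / 2 * INR (length (concat Bs))
  <= sumR (map (block_cost r l) Bs) + 2 * INR l * INR (switches (A r n)).
Proof.
  intros He Hr Hl Hd HF Hadv.
  destruct (adv_common_subseq _ _ (eps / 2) ltac:(lra) Hadv) as (c & Hcv & HcA & HN & Hgain).
  rewrite length_A in Hgain.
  pose proof (blocks_match_le r n l L Hr Hl Hd Bs c (A r n) [] [] HF (app_nil_r _) Hcv HcA).
  rewrite length_A in *.
  pose proof (le_INR _ _ (subseq_length _ _ Hcv)). pose proof (pos_INR (length (concat Bs))).
  repeat split; [exact HN | nra | lra].
Qed.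

Lemma avg_block_var_ge eps r n l L Bs : 0 < eps < 1/20 -> (0 < r)%nat -> (0 < l)%nat ->
  Nat.divide l L -> INR l = eps ^ 2 * INR r -> INR r <= eps ^ 2 * INR L ->
  Forall (fun B => length B = L) Bs -> adv (concat Bs) (A r n) >= eps / 2 ->
  average (map (block_var l) Bs) >= eps ^ 3 / 1200.
Proof.
  intros He Hr Hl Hd Hlr HrL HF Hadv.
  destruct (adv_le_block_costs eps r n l L Bs ltac:(lra) Hr Hl Hd HF Hadv) as (HN & Hn & Hgain).
  rewrite (length_concat_uniform Bs L HF), mult_INR in *.
  assert (HL : (0 < L)%nat) by nia. assert (HK : (0 < length Bs)%nat) by nia.
  set (t := eps / 10).
  pose proof (sum_block_cost_le r l L Bs t Hl Hd HL ltac:(unfold t; lra) HF) as Hcost.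
  pose proof (le_INR _ _ (switches_A r n Hr)) as Hsw. rewrite mult_INR in Hsw.
  rewrite average_sumR, length_map.
  set (K := INR (length Bs)) in *. set (N := K * INR L) in *.
  set (S := sumR (map (block_var l) Bs)) in *.
  assert (0 < K) by (apply lt_0_INR; exact HK).
  assert (0 < INR L) by (apply lt_0_INR; exact HL).
  assert (0 < INR r) by (apply lt_0_INR; exact Hr).
  assert (0 < N) by (unfold N; nra).
  apply Rnot_lt_ge. intro HS.
  assert (HS' : S < K * (eps ^ 3 / 1200))
    by (apply (Rmult_lt_reg_r (/ K)); [apply Rinv_0_lt_compat; lra | field_simplify; lra]).
  assert (T1 : K * INR r <= eps ^ 2 * N) by (unfold N; nra).
  assert (T2 : 2 * INR l * INR (switches (A r n)) <= 4 * eps ^ 2 * N) by (rewrite Hlr; nra).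
  assert (T3 : K * (3 * INR L / 4 * t) = 3 * eps / 40 * N) by (unfold N, t; field).
  assert (T4 : 3 * INR L / 4 / t * S <= eps ^ 2 / 160 * N).
  { replace (3 * INR L / 4 / t * S) with (15 * INR L / (2 * eps) * S) by (unfold t; field; lra).
    assert (0 <= 15 * INR L / (2 * eps)) by (apply Rmult_le_pos; [lra | left; apply Rinv_0_lt_compat; lra]).
    replace (eps ^ 2 / 160 * N) with (15 * INR L / (2 * eps) * (K * (eps ^ 3 / 1200)))
      by (unfold N; field; lra).
    nra. }
  assert (eps / 2 * N <= (5 * eps ^ 2 + eps ^ 2 / 160 + 3 * eps / 40) * N) by nra.
  assert (eps / 2 <= 5 * eps ^ 2 + eps ^ 2 / 160 + 3 * eps / 40)
    by (apply (Rmult_le_reg_r N); lra).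
  nra.
Qed.

Lemma divisor_chain_map_seq (l : nat -> nat) a c m :
  (forall j, (a <= j < a + c)%nat -> (0 < l j)%nat) ->
  ((0 < c)%nat -> Nat.divide (l a) m) ->
  (forall j, (a <= j)%nat -> (S j < a + c)%nat -> Nat.divide (l (S j)) (l j)) ->
  divisor_chain m (map l (seq a c)).
Proof.
  revert a m; induction c as [|c IH]; intros a m Hpos Hm Hd; simpl; [exact I|].
  repeat split; [apply Hpos; lia | apply Hm; lia |].
  apply IH; intros; [apply Hpos | apply Hd | apply Hd]; lia.
Qed.

Lemma last_level_map_seq (l : nat -> nat) m a c :
  last_level m (map l (seq a (S c))) = l (a + c)%nat.
Proof.
  revert a m; induction c as [|c IH]; intros a m; [simpl; now rewrite Nat.add_0_r|].
  change (last_level (l a) (map l (seq (S a) (S c))) = l (a + S c)%nat).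
  rewrite IH. f_equal. lia.
Qed.

Lemma last_level_levels (l : nat -> nat) m i : (0 < i)%nat -> last_level m (levels l i) = l i.
Proof. destruct i as [|i]; [lia|]. intros _. apply last_level_map_seq. Qed.

Theorem lemma3p3 :
  exists eps0 : R, 0 < eps0 /\
  forall eps : R, 0 < eps < eps0 ->
  forall (n : nat) (v : list bool) (k : nat) (r l : nat -> nat),
    (0 < n)%nat ->
    (forall j, (1 <= j <= k)%nat -> (0 < r j)%nat) ->
    (forall j, (1 <= j < k)%nat -> (r (S j) < r j)%nat) ->
    (forall j, (1 <= j < k)%nat -> INR (r j) >= INR (r (S j)) / eps ^ 4) ->
    (forall j, (1 <= j <= k)%nat -> INR (l j) = eps ^ 2 * INR (r j)) ->
    Nat.divide (l 1%nat) (length v) ->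
    (forall j, (1 <= j < k)%nat -> Nat.divide (l (S j)) (l j)) ->
    (forall j, (1 <= j <= k)%nat -> adv v (A (r j) n) >= eps / 2) ->
    forall i, (1 <= i < k)%nat ->
      VarB l v (S i) >= VarB l v i + eps ^ 3 / 1200.
Proof.
  exists (1/20). split; [lra|].
  intros eps He n v k r l _ Hr _ Hr4 Hl Hd1 Hd Hadv i Hi.
  assert (Hlpos : forall j, (1 <= j <= k)%nat -> (0 < l j)%nat).
  { intros j Hj. apply INR_lt. rewrite (Hl j Hj).
    pose proof (lt_0_INR _ (Hr j Hj)). simpl INR. pose proof (pow_lt eps 2). nra. }
  assert (Hchain : forall c, (c <= k)%nat -> divisor_chain (length v) (levels l c))
    by (intros c Hc; apply divisor_chain_map_seq; intros; auto with zarith).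
  destruct (blocks_iter_spec _ _ (Hchain i ltac:(lia))) as (_ & HF & Hcat).
  rewrite last_level_levels in HF by lia.
  assert (HrL : INR (r (S i)) <= eps ^ 2 * INR (l i)).
  { rewrite (Hl i ltac:(lia)). pose proof (Hr4 i Hi). pose proof (pow_lt eps 4).
    apply (Rmult_le_reg_r (/ eps ^ 4)); [apply Rinv_0_lt_compat; lra |].
    field_simplify; lra. }
  pose proof (VarB_succ_sub l v i (Hchain (S i) ltac:(lia))) as HV.
  pose proof (avg_block_var_ge eps (r (S i)) n (l (S i)) (l i) _ He (Hr (S i) ltac:(lia))
    (Hlpos (S i) ltac:(lia)) (Hd i Hi) (Hl (S i) ltac:(lia)) HrL HF
    ltac:(rewrite Hcat; apply Hadv; lia)).
  lra.
Qed.
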